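(* Let $k\ge 1$. Let $\mathcal M^\Box_{2k+1,0}$ (resp. $\mathcal M^\Box_{2k+1,1}$) be the set of elements of $\mathcal M^\Box_{2k+1}$ whose central square $k+1$ is land (resp. water). Then $\mathrm{red}\circ\mathrm{contr}$ restricts to bijections $\mathcal M^\Box_{2k+1,0}\to\mathcal N_k$ and $\mathcal M^\Box_{2k+1,1}\to \mathcal N_{k,1}\cup\mathcal N_{k,2}\cup\{R_{\mathrm{land}}\}$. Consequently $M^\Box_{2k+1} = N_k + N_{k,1}+N_{k,2}+1$.
   Context: Colorings. Each square is colored water or land. Two distinct squares are adjacent if they share an edge after all edge identifications; a set of squares is connected if its induced adjacency graph is connected (empty set counts as connected). (N1): the water is connected. For an interior (non-boundary) vertex $v$, its square-degree is the number of distinct squares having $v$ as a corner. (N2$\Box$): no interior vertex of square-degree $4$ has all incident squares water. A $2\times k$ Nurikabe rectangle is a coloring of the $2\times k$ grid (columns $1,\dots,k$ left to right, no identifications) with connected water and no $2\times 2$ block of water squares; $\mathcal N_k$ is the set of these, $N_k=|\mathcal N_k|$; $\mathcal N_{k,i}$ is the subset with exactly $i$ water squares in column $k$, $N_{k,i}=|\mathcal N_{k,i}|$. $R_{\mathrm{land}}\in\mathcal N_k$ is the all-land rectangle. Tile $[0,n]\times[0,1]$ by unit squares $[j-1,j]\times[0,1]$, called square $j$. The $1\times n$ Möbius strip identifies $(x,1)\sim(n-x,0)$ for $x\in[0,n]$; its boundary is the image of the vertical sides. $\mathcal M^\Box_n$ is the set of colorings of the $1\times n$ Möbius strip satisfying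 (N1) and (N2$\Box$), $M^\Box_n=|\mathcal M^\Box_n|$. Contraction: for a coloring of the $1\times(2k+1)$ Möbius strip, $\mathrm{contr}$ gives the coloring of the $1\times 2k$ Möbius strip obtained by deleting square $k+1$, with square $j\le k$ keeping position $j$ and square $j\ge k+2$ moving to position $j-1$. Rectangular reduction: for a coloring of the $1\times 2k$ Möbius strip, $\mathrm{red}$ gives the coloring of the $2\times k$ grid whose column $j$ has top square colored as square $j$ and bottom square colored as square $2k+1-j$. *)

(* Water = true, land = false. Squares are 0-indexed:
   square j (paper, 1-indexed) is the ordinal j-1. *)
From mathcomp Require Import all_boot.
From mathcomp Require Import zify.
Set Implicit Arguments. Unset Strict Implicit. Unset Printing Implicit Defensive.

(* Connectedness of a set S of vertices in the induced subgraph of e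
   (the empty set is connected). *)
Definition connectedb (T : finType) (e : rel T) (S : {set T}) : bool :=
  [forall x in S, forall y in S,
     connect [rel a b | [&& a \in S, b \in S & e a b]] x y].

Definition water_set (T : finType) (c : {ffun T -> bool}) : {set T} :=
  [set x | c x].

(* Two distinct squares share an edge: a common vertical edge (|i-j|=1),
   or the top edge of one is glued to the bottom edge of the other,
   i.e. (1-indexed) j = n+1-i, i.e. (0-indexed) i + j + 1 = n. *)
Definition mob_adj (n : nat) : rel 'I_n :=
  fun i j => (i != j) && [|| i.+1 == j, j.+1 == i | i + j + 1 == n].

(* Lattice points (x,y), x in [0,n], y in {0,1} (true = 1). *)
Definition mob_pt (n : nat) := ('I_n.+1 * bool)%type.

(* The identification (x,1) ~ (n-x,0) on lattice points. *)
Definition mob_equiv (n : nat) (p q : mob_pt n) : bool :=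
  (p == q) || ((p.2 != q.2) && (p.1 + q.1 == n)).

(* p is a corner of square s = [s, s+1] x [0,1] (0-indexed). *)
Definition mob_corner (n : nat) (s : 'I_n) (p : mob_pt n) : bool :=
  (p.1 == s :> nat) || (p.1 == s.+1 :> nat).

Definition mob_squares_at (n : nat) (v : mob_pt n) : {set 'I_n} :=
  [set s : 'I_n | [exists p : mob_pt n, mob_corner s p && mob_equiv v p]].

(* Interior vertex: not on the image of the vertical sides x = 0, x = n. *)
Definition mob_interior (n : nat) (v : mob_pt n) : bool := 0 < v.1 < n.

Definition mob_N1 (n : nat) (c : {ffun 'I_n -> bool}) : bool :=
  connectedb (@mob_adj n) (water_set c).

Definition mob_N2box (n : nat) (c : {ffun 'I_n -> bool}) : bool :=
  [forall v : mob_pt n,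
     (mob_interior v && (#|mob_squares_at v| == 4)) ==>
       [exists s in mob_squares_at v, ~~ c s]].

Definition Mbox (n : nat) : {set {ffun 'I_n -> bool}} :=
  [set c | mob_N1 c && mob_N2box c].

(* cell (r, j): row r (0 = top, 1 = bottom), column j (0-indexed). *)
Definition grid_adj (k : nat) : rel ('I_2 * 'I_k) :=
  fun p q => ((p.1 == q.1) && ((p.2.+1 == q.2 :> nat) || (q.2.+1 == p.2 :> nat)))
          || ((p.2 == q.2) && (p.1 != q.1)).

Definition no_water_2x2 (k : nat) (R : {ffun 'I_2 * 'I_k -> bool}) : bool :=
  [forall c : 'I_k, forall d : 'I_k, (c.+1 == d :> nat) ==>
     ~~ [&& R (ord0, c), R (ord_max, c), R (ord0, d) & R (ord_max, d)]].

Definition Nurik (k : nat) : {set {ffun 'I_2 * 'I_k -> bool}} :=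
  [set R | connectedb (@grid_adj k) (water_set R) && no_water_2x2 R].

Definition Nurik_i (k i : nat) : {set {ffun 'I_2 * 'I_k -> bool}} :=
  [set R in Nurik k | [forall c : 'I_k, (c == k.-1 :> nat) ==>
                          (#|[set r : 'I_2 | R (r, c)]| == i)]].

Definition R_land (k : nat) : {ffun 'I_2 * 'I_k -> bool} := [ffun _ => false].

Definition contr (k : nat) (c : {ffun 'I_(2 * k).+1 -> bool})
  : {ffun 'I_(2 * k) -> bool} :=
  [ffun j : 'I_(2 * k) => c (inord (if j < k then (j : nat) else j.+1))].

Lemma red_top_lt (k : nat) (j : 'I_k) : j < 2 * k.
Proof. have := ltn_ord j; lia. Qed.

Lemma red_bot_lt (k : nat) (j : 'I_k) : (2 * k).-1 - j < 2 * k.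
Proof. have := ltn_ord j; lia. Qed.

(* red: column j (1-indexed) has top = square j, bottom = square 2k+1-j;
   0-indexed: top = j, bottom = 2k-1-j. *)
Definition red (k : nat) (m : {ffun 'I_(2 * k) -> bool})
  : {ffun 'I_2 * 'I_k -> bool} :=
  [ffun p : 'I_2 * 'I_k =>
     if p.1 == ord0 then m (Ordinal (red_top_lt p.2))
     else m (Ordinal (red_bot_lt p.2))].

(* central square k+1 (1-indexed) = k (0-indexed) *)
Definition Mbox_c (k : nat) (b : bool) : {set {ffun 'I_(2 * k).+1 -> bool}} :=
  [set c in Mbox (2 * k).+1 | c (inord k) == b].

From mathcomp Require Import all_boot zify.
Set Implicit Arguments. Unset Strict Implicit. Unset Printing Implicit Defensive.

(* Removing the central square of the 1 x (2k+1) Moebius strip and folding the rest at it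
   identifies the other squares with the cells of the 2 x k grid, preserving adjacency
   (this is red o contr).  The central square is adjacent exactly to the two cells of the
   last column, which are adjacent to each other, so a water set containing the centre is
   connected iff the rest of it is empty, or connected and meets the last column.  The
   interior vertices of square-degree 4 are those away from the centre, and their four
   squares are the images of the 2 x 2 blocks of the grid, so (N2 box) becomes the absence
   of 2 x 2 water blocks.  Since a colouring is determined by its image and its central
   colour, both restrictions of red o contr are bijections. *)

Lemma homo_connect (T U : finType) (e : rel T) (e' : rel U) (h : T -> U) :
  (forall x y, e x y -> connect e' (h x) (h y)) ->
  forall x y, connect e x y -> connect e' (h x) (h y).
Proof.
move=> eh x y /connectP [p + ->]; elim: p x => [|z p IHp] x /=; first by rewrite connect0.
by case/andP=> /eh exz /IHp; apply: connect_trans.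
Qed.

Lemma connectedbP (T : finType) (e : rel T) (S : {set T}) :
  reflect {in S &, forall x y, connect [rel a b | [&& a \in S, b \in S & e a b]] x y}
          (connectedb e S).
Proof.
apply: (iffP forall_inP) => [H x y /H /forall_inP|H x Sx]; first exact.
by apply/forall_inP => y; apply: H.
Qed.

Section ConnectedbTransport.

Variables (T U : finType) (e : rel T) (e' : rel U) (S : {set T}).
Variables (f : U -> T) (g : T -> U).
Hypotheses (fK : cancel f g) (gK : {in S, cancel g f}).
Hypothesis e_f : forall a b, e (f a) (f b) = e' a b.

Lemma connectedb_transport : connectedb e S = connectedb e' [set a | f a \in S].
Proof.
apply/connectedbP/connectedbP => conS x y.
- rewrite !inE => Sx Sy; rewrite -[x]fK -[y]fK.
  apply: (homo_connect (h := g)); last exact: conS.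
  move=> a b /and3P [Sa Sb eab]; apply: connect1.
  by rewrite /= !inE !gK // Sa Sb -e_f !gK.
- move=> Sx Sy; rewrite -(gK Sx) -(gK Sy).
  apply: (homo_connect (h := f)); last by apply: conS; rewrite inE gK.
  move=> a b /and3P [Sa Sb eab]; rewrite !inE in Sa Sb.
  by apply: connect1; rewrite /= Sa Sb e_f.
Qed.

End ConnectedbTransport.

Section ConnectedbSetU1.

Variables (T : finType) (e : rel T) (v : T) (S : {set T}).
Hypotheses (e_sym : symmetric e) (vNS : v \notin S).

Let restr (A : {set T}) := [rel a b | [&& a \in A, b \in A & e a b]].

Lemma connectedb_setU1_nbr : S != set0 -> connectedb e (v |: S) -> [exists x in S, e v x].
Proof.
case/set0Pn => s Ss /connectedbP conVS; apply: contraT => /exists_inPn noNbr.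
have stuck q x : x = v -> path (restr (v |: S)) x q -> last x q = v.
  elim: q x => //= y q IHq x -> /andP [/and3P [_ VSy evy]]; apply: IHq.
  by case/setU1P: VSy => // Sy; rewrite (negbTE (noNbr y Sy)) in evy.
have /connectP [p /(stuck p v erefl) vp vs] := conVS v s (setU11 _ _) (setU1r _ Ss).
by move: Ss; rewrite vs vp (negbTE vNS).
Qed.

Variables (w : T).
Hypotheses (Sw : w \in S) (evw : e v w).

Lemma connectedb_setU1_add : connectedb e S -> connectedb e (v |: S).
Proof.
move/connectedbP => conS; apply/connectedbP.
have S_VS : subrel (restr S) (connect (restr (v |: S))).
  by move=> a b /and3P [Sa Sb eab]; apply: connect1; rewrite /= !setU1r.
have VSw : w \in v |: S := setU1r _ Sw.
have toV x : x \in v |: S -> connect (restr (v |: S)) x v /\ connect (restr (v |: S)) v x.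
  case/setU1P => [-> | Sx]; first by rewrite connect0.
  split.
    apply: connect_trans (connect_sub S_VS (conS x w Sx Sw)) (connect1 _).
    by rewrite /= VSw setU11 e_sym.
  apply: connect_trans (connect1 _) (connect_sub S_VS (conS w x Sw Sx)).
  by rewrite /= VSw setU11.
by move=> x y /toV [xv _] /toV [_ vy]; apply: connect_trans vy.
Qed.

Hypothesis adj_nbr : {in S &, forall x y, e v x -> e v y -> x != y -> e x y}.

(* A walk through v is rerouted through its neighbour w, since all the neighbours of v are adjacent. *)
Lemma connectedb_setU1_drop : connectedb e (v |: S) -> connectedb e S.
Proof.
move/connectedbP => conVS; pose h x := if x == v then w else x.
have hS x : x \in S -> h x = x.
  by move=> Sx; rewrite /h ifN //; have := vNS; apply: contraNneq => <-.
have inS x : x \in v |: S -> x != v -> x \in S.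
  by case/setU1P => [-> | //]; rewrite eqxx.
apply/connectedbP => x y Sx Sy; rewrite -(hS x Sx) -(hS y Sy).
apply: homo_connect (conVS x y (setU1r _ Sx) (setU1r _ Sy)).
move=> a b /and3P [VSa VSb eab]; rewrite /h.
have [av | nav] := eqVneq a v; have [bv | nbv] := eqVneq b v; rewrite ?connect0 //.
- have Sb := inS b VSb nbv; have [<- | nwb] := eqVneq w b; first exact: connect0.
  by apply: connect1; rewrite /= Sw Sb adj_nbr // -av.
- have Sa := inS a VSa nav; have [-> | naw] := eqVneq a w; first exact: connect0.
  by apply: connect1; rewrite /= Sw Sa e_sym adj_nbr // 1?eq_sym // e_sym -bv.
- by apply: connect1; rewrite /= (inS a) ?(inS b).
Qed.

End ConnectedbSetU1.

Lemma connectedb_setU1 (T : finType) (e : rel T) (v : T) (S : {set T}) :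
  symmetric e -> v \notin S ->
  {in S &, forall x y, e v x -> e v y -> x != y -> e x y} ->
  connectedb e (v |: S) = (S == set0) || connectedb e S && [exists x in S, e v x].
Proof.
move=> e_sym vNS adj_nbr; have [-> | S_neq0] := eqVneq S set0.
  by apply/connectedbP => x y; rewrite setU0 !inE => /eqP -> /eqP ->; apply: connect0.
apply/idP/andP => [conVS | [conS]].
  have /exists_inP [w Sw evw] := connectedb_setU1_nbr vNS S_neq0 conVS.
  split; last by apply/exists_inP; exists w.
  exact: (connectedb_setU1_drop e_sym vNS Sw evw adj_nbr conVS).
by case/exists_inP => w Sw evw; exact: (connectedb_setU1_add e_sym Sw evw conS).
Qed.

Lemma mob_adjC n : symmetric (@mob_adj n).
Proof. by move=> i j; rewrite /mob_adj eq_sym; apply/idP/idP; lia. Qed.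

(* Truncated subtraction keeps this correct also at the boundary vertices. *)
Lemma mem_mob_squares_at n (v : mob_pt n) (s : 'I_n) :
  (s \in mob_squares_at v) =
  [|| s == v.1 - 1 :> nat, s == v.1 :> nat, s == n - v.1 - 1 :> nat | s == n - v.1 :> nat].
Proof.
case: v => x y; rewrite inE /mob_corner /mob_equiv /=; apply/existsP/idP.
  by case=> -[p q] /= /andP [sp /orP [/eqP [-> _] | /andP [_ /eqP pq]]]; apply/idP; lia.
case: (boolP ((s == x - 1 :> nat) || (s == x :> nat))) => [sx _ | nsx sx].
  by exists (x, y); rewrite eqxx andbT /=; apply/idP; lia.
have x'_lt : n - x < n.+1 by lia.
exists (Ordinal x'_lt, ~~ y); apply/andP; split; first by rewrite /=; apply/idP; lia.
by rewrite /= eq_sym; case: y {nsx sx} => /=; apply/idP; have := ltn_ord x; lia.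
Qed.

Definition col_pair k (j : nat) : {set 'I_2 * 'I_k} :=
  [set p : 'I_2 * 'I_k | (p.2 == j.-1 :> nat) || (p.2 == j :> nat)].

Lemma I2_cases (r : 'I_2) : r = ord0 \/ r = ord_max.
Proof. by case: r => -[|[|//]] ?; [left | right]; apply: val_inj. Qed.

Lemma card_col_pair k (j : 'I_k) : 0 < j -> #|col_pair k j| = 4.
Proof.
move=> j_gt0; have jm1_lt : j.-1 < k by have := ltn_ord j; lia.
have -> : col_pair k j = setX [set: 'I_2] [set Ordinal jm1_lt; j].
  by apply/setP => -[r c]; rewrite !inE -!val_eqE.
by rewrite cardsX cardsT card_ord cards2 -val_eqE /= (_ : j.-1 != j) //; lia.
Qed.

Lemma no_water_2x2E k (R : {ffun 'I_2 * 'I_k -> bool}) :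
  no_water_2x2 R = [forall j : 'I_k, (0 < j) ==> [exists p in col_pair k j, ~~ R p]].
Proof.
have colE (c d : 'I_k) p : c.+1 = d ->
    (p \in col_pair k d) = [|| p == (ord0, c), p == (ord_max, c), p == (ord0, d) | p == (ord_max, d)].
  move=> cd; case: p => r x; rewrite !inE -!pair_eqE /= -!val_eqE /= -cd /=.
  by case: (I2_cases r) => ->; case: (x == c :> nat); case: (x == c.+1 :> nat).
apply/forallP/forallP => [nw d | nw c].
  apply/implyP => d_gt0; have c_lt : d.-1 < k by have := ltn_ord d; lia.
  have cd : (Ordinal c_lt).+1 = d by rewrite /=; lia.
  move/forallP: (nw (Ordinal c_lt)) => /(_ d) /implyP; rewrite cd eqxx => /(_ isT).
  rewrite !negb_and => /or4P nR; apply/exists_inP.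
  set c := Ordinal c_lt in cd nR.
  by case: nR => nR; [exists (ord0, c) | exists (ord_max, c) | exists (ord0, d)
    | exists (ord_max, d)]; rewrite // (colE c) // eqxx ?orbT.
apply/forallP => d; apply/implyP => /eqP cd.
have d_gt0 : 0 < d by rewrite -cd.
move/implyP: (nw d) => /(_ d_gt0) /exists_inP [p].
by rewrite (colE c) // => /or4P [] /eqP -> nR; apply: contra nR => /and4P [].
Qed.

(* [k] is the paper's k - 1: the strip has 2k + 3 squares, the central one being the
   0-indexed square k + 1, and the grid has k + 1 columns. *)
Section Strip.

Variable k : nat.

Local Notation strip := 'I_(2 * k.+1).+1.
Local Notation cell := ('I_2 * 'I_k.+1)%type.

Definition ctr : strip := inord k.+1.

Definition sq_of (p : cell) : strip :=
  inord (if p.1 == ord0 then p.2 : nat else 2 * k.+1 - p.2).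

Definition cell_of (i : strip) : cell :=
  if i < k.+1 then (ord0, inord i) else (ord_max, inord (2 * k.+1 - i)).

Definition top_last : cell := (ord0, ord_max).
Definition bot_last : cell := (ord_max, ord_max).

Lemma val_ctr : ctr = k.+1 :> nat.
Proof. by rewrite inordK //; lia. Qed.

Lemma val_sq_of p : sq_of p = (if p.1 == ord0 then p.2 : nat else 2 * k.+1 - p.2) :> nat.
Proof. by rewrite inordK //; have := ltn_ord p.2; case: ifP; lia. Qed.

Lemma sq_of_neq_ctr p : sq_of p != ctr.
Proof. by rewrite -val_eqE /= val_sq_of val_ctr; have := ltn_ord p.2; case: ifP; lia. Qed.

Lemma sq_ofK : cancel sq_of cell_of.
Proof.
move=> [r j]; rewrite /cell_of val_sq_of /=; have := ltn_ord j.
case: (I2_cases r) => -> /= j_lt; first by rewrite j_lt; congr pair; apply/val_inj/inordK.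
rewrite ifN; last by lia.
by congr pair; apply/val_inj; rewrite /= inordK; lia.
Qed.

Lemma sq_of_inj : injective sq_of.
Proof. exact: can_inj sq_ofK. Qed.

Lemma cell_ofK i : i != ctr -> sq_of (cell_of i) = i.
Proof.
rewrite -val_eqE /= val_ctr => i_neq; apply/val_inj; rewrite /= val_sq_of /cell_of.
by have := ltn_ord i; case: (ltnP i k.+1) => /= i_k i_lt; rewrite inordK; lia.
Qed.

Lemma red_contrE (c : {ffun strip -> bool}) p : red (contr c) p = c (sq_of p).
Proof.
rewrite !ffunE; case: p => r j; have := ltn_ord j.
by case: (I2_cases r) => -> j_lt; congr (c (inord _)) => /=; case: ifP; lia.
Qed.

Lemma mob_adj_sq_of p q : mob_adj (sq_of p) (sq_of q) = grid_adj p q.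
Proof.
case: p q => [r i] [s j]; rewrite /mob_adj /grid_adj -val_eqE /= !val_sq_of /=.
have := ltn_ord i; have := ltn_ord j.
by case: (I2_cases r) => ->; case: (I2_cases s) => -> /= j_lt i_lt;
  rewrite -?val_eqE /=; apply/idP/idP; lia.
Qed.

Lemma mob_adj_ctr i : mob_adj ctr i = (i == sq_of top_last) || (i == sq_of bot_last).
Proof.
rewrite /mob_adj -!val_eqE /= !val_sq_of val_ctr /=.
by have i_lt := ltn_ord i; apply/idP/idP; lia.
Qed.

Lemma water_set_red_contr (c : {ffun strip -> bool}) :
  water_set (red (contr c)) = [set p | sq_of p \in water_set c :\ ctr].
Proof. by apply/setP => p; rewrite !inE sq_of_neq_ctr red_contrE. Qed.

Lemma connectedb_punctured (c : {ffun strip -> bool}) :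
  connectedb (@mob_adj _) (water_set c :\ ctr) =
  connectedb (@grid_adj k.+1) (water_set (red (contr c))).
Proof.
rewrite water_set_red_contr; apply: connectedb_transport sq_ofK _ mob_adj_sq_of.
by move=> i /setD1P [i_ctr _]; apply: cell_ofK.
Qed.

Lemma punctured_eq0 (c : {ffun strip -> bool}) :
  (water_set c :\ ctr == set0) = (red (contr c) == R_land k.+1).
Proof.
apply/eqP/eqP => [W0 | R0].
  apply/ffunP => p; rewrite red_contrE ffunE; apply/negbTE.
  by have := in_set0 (sq_of p); rewrite -W0 !inE sq_of_neq_ctr /= => ->.
apply/setP => i; rewrite !inE; have [// | i_ctr] := eqVneq i ctr.
by rewrite -(cell_ofK i_ctr) -red_contrE R0 ffunE.
Qed.

Lemma punctured_ctr_nbr (c : {ffun strip -> bool}) :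
  [exists i in water_set c :\ ctr, mob_adj ctr i] =
  red (contr c) top_last || red (contr c) bot_last.
Proof.
rewrite !red_contrE; apply/exists_inP/idP => [[i] | ].
  by rewrite !inE mob_adj_ctr => /andP [_ ci] /orP [] /eqP i_eq; rewrite -i_eq ci ?orbT.
by case/orP => [ct | cb]; [exists (sq_of top_last) | exists (sq_of bot_last)];
  rewrite ?inE ?sq_of_neq_ctr // mob_adj_ctr eqxx ?orbT.
Qed.

Lemma mob_N1_land (c : {ffun strip -> bool}) : ~~ c ctr ->
  mob_N1 c = connectedb (@grid_adj k.+1) (water_set (red (contr c))).
Proof.
move=> c_ctr; rewrite /mob_N1 -connectedb_punctured; congr connectedb.
by apply/setP => i; rewrite !inE; case: eqVneq => // ->; rewrite (negbTE c_ctr).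
Qed.

Lemma mob_N1_water (c : {ffun strip -> bool}) : c ctr ->
  mob_N1 c = (red (contr c) == R_land k.+1)
    || connectedb (@grid_adj k.+1) (water_set (red (contr c)))
       && (red (contr c) top_last || red (contr c) bot_last).
Proof.
move=> c_ctr; have W_ctr : ctr \in water_set c by rewrite inE.
rewrite /mob_N1 -(setD1K W_ctr) connectedb_setU1 ?setD11 //.
- by rewrite punctured_eq0 connectedb_punctured punctured_ctr_nbr.
- exact: mob_adjC.
move=> x y _ _; rewrite !mob_adj_ctr.
by do 2![case/orP=> /eqP ->]; rewrite ?eqxx // => _; rewrite mob_adj_sq_of /grid_adj /= eqxx.
Qed.

Lemma ctr_notin_sq_of_imset (A : {set cell}) : ctr \notin sq_of @: A.
Proof. by apply/imsetP => -[p _ /eqP]; rewrite eq_sym (negbTE (sq_of_neq_ctr p)). Qed.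

Lemma mob_squares_at_col (j : 'I_k.+1) (v : mob_pt (2 * k.+1).+1) :
  0 < j -> (v.1 == j :> nat) || (v.1 + j == (2 * k.+1).+1) ->
  mob_squares_at v = sq_of @: col_pair k.+1 j.
Proof.
move=> j_gt0 vj; have := ltn_ord j => j_lt.
apply/setP => i; rewrite mem_mob_squares_at; have [-> | i_ctr] := eqVneq i ctr.
  by rewrite (negbTE (ctr_notin_sq_of_imset _)) val_ctr; apply/negbTE/negP; lia.
rewrite -(cell_ofK i_ctr) mem_imset ?inE ?val_sq_of; last exact: sq_of_inj.
have := ltn_ord (cell_of i).2.
by case: (I2_cases (cell_of i).1) => -> /= c_lt; apply/idP/idP; lia.
Qed.

Lemma card_mob_squares_at_mid (v : mob_pt (2 * k.+1).+1) :
  (v.1 == k.+1 :> nat) || (v.1 == k.+2 :> nat) -> #|mob_squares_at v| < 4.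
Proof.
move=> v_mid; pose mid := [:: (inord k : strip); inord k.+1; inord k.+2].
have /subset_leq_card : mob_squares_at v \subset mid.
  by apply/subsetP => i; rewrite mem_mob_squares_at !inE -!val_eqE /= !inordK; lia.
by move/leq_ltn_trans; apply; apply: leq_ltn_trans (card_size _) _.
Qed.

Lemma mob_N2box_red_contr (c : {ffun strip -> bool}) :
  mob_N2box c = no_water_2x2 (red (contr c)).
Proof.
rewrite no_water_2x2E; apply/forallP/forallP => [N2 j | nw [x y]].
  apply/implyP => j_gt0; have j_lt : j < (2 * k.+1).+2 by have := ltn_ord j; lia.
  have sqE : mob_squares_at (Ordinal j_lt, false) = sq_of @: col_pair k.+1 j.
    by apply: mob_squares_at_col; rewrite /= ?eqxx.
  move/implyP: (N2 (Ordinal j_lt, false)).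
  rewrite /mob_interior sqE card_imset ?card_col_pair //=; last exact: sq_of_inj.
  have -> : 0 < j < (2 * k.+1).+1 by have := ltn_ord j; lia.
  move=> /(_ isT) /exists_inP [_ /imsetP [p col_p ->] nc].
  by apply/exists_inP; exists p; rewrite // red_contrE.
apply/implyP; rewrite /mob_interior /= => /andP [x_int /eqP card4].
have x_side : (x != k.+1 :> nat) && (x != k.+2 :> nat).
  rewrite -negb_or; apply/negP => /(card_mob_squares_at_mid (v := (x, y))).
  by rewrite card4.
have j_lt : (if x <= k then x : nat else (2 * k.+1).+1 - x) < k.+1.
  by case: ifP; lia.
have j_gt0 : 0 < Ordinal j_lt by rewrite /=; case: ifP; lia.
rewrite (@mob_squares_at_col (Ordinal j_lt)) //=; last by case: ifP; lia.
move/implyP: (nw (Ordinal j_lt)) => /(_ j_gt0) /exists_inP [p col_p nR].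
by apply/exists_inP; exists (sq_of p); [apply: imset_f | rewrite -red_contrE].
Qed.

Lemma card_I2 (P : pred 'I_2) : #|[set r | P r]| = P ord0 + P ord_max.
Proof.
rewrite -sum1dep_card big_mkcond /= big_ord_recr big_ord_recr big_ord0 /=.
have -> : widen_ord (leqnSn 1) ord_max = ord0 :> 'I_2 by apply/val_inj.
by case: (P ord0); case: (P ord_max).
Qed.

Lemma Nurik_iE (R : {ffun cell -> bool}) i :
  (R \in Nurik_i k.+1 i) = (R \in Nurik k.+1) && (R top_last + R bot_last == i).
Proof.
rewrite [in LHS]inE; congr andb; apply/forallP/idP => [/(_ ord_max) | last_i c].
  by rewrite eqxx /= (card_I2 (fun r => R (r, ord_max))).
apply/implyP => /eqP c_last; have -> : c = ord_max by apply/val_inj.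
by rewrite (card_I2 (fun r => R (r, ord_max))).
Qed.

Lemma R_land_Nurik : R_land k.+1 \in Nurik k.+1.
Proof.
rewrite inE; apply/andP; split.
  by apply/connectedbP => p q; rewrite inE ffunE.
by apply/forallP => c; apply/forallP => d; apply/implyP; rewrite !ffunE.
Qed.

Lemma mem_Nurik_water_target (R : {ffun cell -> bool}) :
  (R \in Nurik_i k.+1 1 :|: Nurik_i k.+1 2 :|: [set R_land k.+1]) =
  (R == R_land k.+1) || (R \in Nurik k.+1) && (R top_last || R bot_last).
Proof.
rewrite !in_setU !Nurik_iE in_set1 orbC.
by case: (R top_last); case: (R bot_last); case: (R \in Nurik k.+1); rewrite ?andbF ?orbF.
Qed.

Lemma card_Nurik_water_target :
  #|Nurik_i k.+1 1 :|: Nurik_i k.+1 2 :|: [set R_land k.+1]| =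
  #|Nurik_i k.+1 1| + #|Nurik_i k.+1 2| + 1.
Proof.
rewrite setUC cardsU1 cardsU.
have -> : Nurik_i k.+1 1 :&: Nurik_i k.+1 2 = set0.
  apply/setP => R; rewrite in_setI in_set0 !Nurik_iE;
  by case: (R top_last); case: (R bot_last); rewrite ?andbF.
by rewrite cards0 subn0 addnC !in_setU !Nurik_iE !ffunE /= !andbF.
Qed.

Lemma mem_Mbox_land (c : {ffun strip -> bool}) : ~~ c ctr ->
  (c \in Mbox (2 * k.+1).+1) = (red (contr c) \in Nurik k.+1).
Proof. by move=> c_ctr; rewrite !inE mob_N1_land // mob_N2box_red_contr. Qed.

Lemma mem_Mbox_water (c : {ffun strip -> bool}) : c ctr ->
  (c \in Mbox (2 * k.+1).+1) =
  (red (contr c) \in Nurik_i k.+1 1 :|: Nurik_i k.+1 2 :|: [set R_land k.+1]).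
Proof.
move=> c_ctr; rewrite mem_Nurik_water_target inE mob_N1_water // mob_N2box_red_contr.
have [-> | _] := eqVneq (red (contr c)) (R_land k.+1); last by rewrite inE /= andbAC.
by move: R_land_Nurik; rewrite inE => /andP [_ ->].
Qed.

Definition with_ctr (b : bool) (R : {ffun cell -> bool}) : {ffun strip -> bool} :=
  [ffun i => if i == ctr then b else R (cell_of i)].

Lemma with_ctr_ctr b R : with_ctr b R ctr = b.
Proof. by rewrite ffunE eqxx. Qed.

Lemma red_contr_with_ctr b R : red (contr (with_ctr b R)) = R.
Proof. by apply/ffunP => p; rewrite red_contrE ffunE (negbTE (sq_of_neq_ctr p)) sq_ofK. Qed.

Lemma red_contr_inj (c1 c2 : {ffun strip -> bool}) :
  c1 ctr = c2 ctr -> red (contr c1) = red (contr c2) -> c1 = c2.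
Proof.
move=> c12 R12; apply/ffunP => i; have [-> // | i_ctr] := eqVneq i ctr.
by rewrite -(cell_ofK i_ctr) -!red_contrE R12.
Qed.

Lemma red_contr_bij (b : bool) (T : {set {ffun cell -> bool}}) :
  (forall c : {ffun strip -> bool}, c ctr = b ->
     (c \in Mbox (2 * k.+1).+1) = (red (contr c) \in T)) ->
  let f := fun c => red (contr c) in
  [/\ {in Mbox_c k.+1 b, forall c, f c \in T}, {in Mbox_c k.+1 b &, injective f},
      (forall R, R \in T -> exists2 c, c \in Mbox_c k.+1 b & f c = R) &
      #|Mbox_c k.+1 b| = #|T|].
Proof.
move=> memT f.
have inT : {in Mbox_c k.+1 b, forall c, f c \in T}.
  by move=> c /setIdP [Mc /eqP cb]; rewrite -memT.
have f_inj : {in Mbox_c k.+1 b &, injective f}.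
  by move=> c1 c2 /setIdP [_ /eqP c1b] /setIdP [_ /eqP c2b]; apply: red_contr_inj; rewrite c1b.
have ontoT R : R \in T -> exists2 c, c \in Mbox_c k.+1 b & f c = R.
  move=> TR; exists (with_ctr b R); last exact: red_contr_with_ctr.
  by rewrite inE memT ?with_ctr_ctr // red_contr_with_ctr TR eqxx.
split => //; rewrite -(card_in_imset f_inj); apply: eq_card => R.
apply/imsetP/idP => [[c Mc ->] | /ontoT [c Mc <-]]; first exact: inT.
by exists c.
Qed.

End Strip.

Lemma card_Mbox_c k : #|Mbox (2 * k).+1| = #|Mbox_c k false| + #|Mbox_c k true|.
Proof.
rewrite -(cardsID [set c : {ffun 'I_(2 * k).+1 -> bool} | c (inord k)] (Mbox _)) addnC.
congr (_ + _); apply: eq_card => c; rewrite !inE.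
  by rewrite eqbF_neg andbC.
by rewrite eqb_id.
Qed.

Theorem lemma4p3 (k : nat) (hk : 1 <= k) :
  let f := fun c => red (contr c) in
  [/\ {in Mbox_c k false, forall c, f c \in Nurik k},
      {in Mbox_c k false &, injective f},
      (forall R, R \in Nurik k -> exists2 c, c \in Mbox_c k false & f c = R),
      [/\ {in Mbox_c k true, forall c,
              f c \in Nurik_i k 1 :|: Nurik_i k 2 :|: [set R_land k]},
          {in Mbox_c k true &, injective f} &
          (forall R, R \in Nurik_i k 1 :|: Nurik_i k 2 :|: [set R_land k] ->
             exists2 c, c \in Mbox_c k true & f c = R)] &
      #|Mbox (2 * k).+1| = #|Nurik k| + #|Nurik_i k 1| + #|Nurik_i k 2| + 1].
Proof.
case: k hk => // k _ f.
have [in0 inj0 onto0 card0] :=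
  @red_contr_bij k false _ (fun c c0 => mem_Mbox_land (negbT c0)).
have [in1 inj1 onto1 card1] := @red_contr_bij k true _ (@mem_Mbox_water k).
split; [exact: in0 | exact: inj0 | exact: onto0 | by split | ].
by rewrite card_Mbox_c card0 card1 card_Nurik_water_target !addnA.
Qed.
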